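(* Let $p,q$ be distinct propositional letters, define $p^0:=q\looparrowright p$, $p^{n+1}:=p\to p^n$, and for $T\subseteq\omega\setminus\{0\}$ let $\Lambda_T:=\{q\looparrowright p^m:m\in T\}$. If $P$ and $T$ are non-empty subsets of $\omega\setminus\{0\}$ with $P\neq T$, then $\mathcal{F}\Lambda_P\neq\mathcal{F}\Lambda_T$.
   Context: Language: propositional letters $\Phi=\{p_0,p_1,\dots\}$; connectives $\neg$, $\lor,\wedge,\to,\leftrightarrow,\vartriangle,\looparrowright$; $\mathsf{FOR}$ the set of all formulas. A substitution is an endomorphism of the free formula algebra. An Epstein model is $\langle v,\mathfrak{R}\rangle$ with $v:\Phi\to\{0,1\}$ and $\mathfrak{R}\subseteq\mathsf{FOR}^2$; truth: letters via $v$, boolean connectives classical, $\vartriangle$: both arguments true and pair in $\mathfrak{R}$; $\looparrowright$: material implication true and pair in $\mathfrak{R}$. $\mathcal{F}$ is the least set containing all classical tautologies of the language and the axioms $(p\looparrowright q)\to(p\to q)$, $(p\vartriangle q)\leftrightarrow((p\looparrowright q)\wedge(p\wedge q))$, closed under uniform substitution and modus ponens; for $\Lambda\subseteq\mathsf{FOR}$, $\mathcal{F}\Lambda$ is the least set containing $\mathcal{F}\cup\Lambda$ closed under uniform substitution and modus ponens (equivalently, the formulas derivable by modus ponens from $\mathcal{F}$ and all substitution instances of members of $\Lambda$). $\mathcal{F}$ is sound and strongly complete for the class of all Epstein models. *)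

From Stdlib Require Import Arith.

Inductive form : Type :=
| Var  : nat -> form
| Neg  : form -> form
| Or   : form -> form -> form
| And  : form -> form -> form
| Imp  : form -> form -> form
| Iff  : form -> form -> form
| Tri  : form -> form -> form
| Loop : form -> form -> form.

Fixpoint subst (s : nat -> form) (f : form) : form :=
  match f with
  | Var n => s n
  | Neg a => Neg (subst s a)
  | Or a b => Or (subst s a) (subst s b)
  | And a b => And (subst s a) (subst s b)
  | Imp a b => Imp (subst s a) (subst s b)
  | Iff a b => Iff (subst s a) (subst s b)
  | Tri a b => Tri (subst s a) (subst s b)
  | Loop a b => Loop (subst s a) (subst s b)
  end.

Fixpoint beval (w : form -> bool) (f : form) : bool :=
  match f with
  | Var _ => w f
  | Neg a => negb (beval w a)
  | Or a b => beval w a || beval w b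
  | And a b => beval w a && beval w b
  | Imp a b => implb (beval w a) (beval w b)
  | Iff a b => Bool.eqb (beval w a) (beval w b)
  | Tri _ _ => w f
  | Loop _ _ => w f
  end.

Definition classical_tautology (f : form) : Prop :=
  forall w : form -> bool, beval w f = true.

Definition p0 := Var 0.
Definition p1 := Var 1.

Definition ax_loop : form := Imp (Loop p0 p1) (Imp p0 p1).
Definition ax_tri : form := Iff (Tri p0 p1) (And (Loop p0 p1) (And p0 p1)).

Inductive FL (Lam : form -> Prop) : form -> Prop :=
| FL_taut : forall f, classical_tautology f -> FL Lam f
| FL_ax_loop : FL Lam ax_loop
| FL_ax_tri : FL Lam ax_tri
| FL_lam : forall f, Lam f -> FL Lam f
| FL_subst : forall s f, FL Lam f -> FL Lam (subst s f)
| FL_mp : forall f g, FL Lam f -> FL Lam (Imp f g) -> FL Lam g.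

Fixpoint ppow (p q : nat) (n : nat) : form :=
  match n with
  | O => Loop (Var q) (Var p)
  | S k => Imp (Var p) (ppow p q k)
  end.

Definition LamT (p q : nat) (T : nat -> Prop) (f : form) : Prop :=
  exists m, T m /\ f = Loop (Var q) (ppow p q m).

(* Interpret formulas in Epstein models; F-derivability is sound for every model that
   validates all substitution instances of the extra axioms.  If [m] is not in [T], take
   the model with all letters false whose relatedness relation omits exactly the pair
   [(q, p^m)].  It refutes [q ↬ p^m], yet validates every instance [Q ↬ P^k] with
   [k ∈ T]: the pair is related because [k ≠ m], and the implication holds because
   [P^k = P → P^(k-1)] for [k > 0], while if [Q] and [P] are both true then [Q ≠ q]. *)
From Stdlib Require Import Bool Classical.

Fixpoint holds (v : nat -> bool) (R : form -> form -> bool) (f : form) : bool :=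
  match f with
  | Var n => v n
  | Neg a => negb (holds v R a)
  | Or a b => holds v R a || holds v R b
  | And a b => holds v R a && holds v R b
  | Imp a b => implb (holds v R a) (holds v R b)
  | Iff a b => Bool.eqb (holds v R a) (holds v R b)
  | Tri a b => holds v R a && holds v R b && R a b
  | Loop a b => implb (holds v R a) (holds v R b) && R a b
  end.

Lemma beval_holds v R f : beval (holds v R) f = holds v R f.
Proof. induction f; simpl; try rewrite IHf; try rewrite IHf1, IHf2; reflexivity. Qed.

Lemma holds_subst v R s f :
  holds v R (subst s f) =
  holds (fun n => holds v R (s n)) (fun a b => R (subst s a) (subst s b)) f.
Proof. induction f; simpl; try rewrite IHf; try rewrite IHf1, IHf2; reflexivity. Qed.

Lemma subst_comp s s' f : subst s (subst s' f) = subst (fun n => subst s (s' n)) f.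
Proof. induction f; simpl; try rewrite IHf; try rewrite IHf1, IHf2; reflexivity. Qed.

Lemma subst_Var f : subst Var f = f.
Proof. induction f; simpl; try rewrite IHf; try rewrite IHf1, IHf2; reflexivity. Qed.

Definition validates_instances (Lam : form -> Prop) v R : Prop :=
  forall s f, Lam f -> holds v R (subst s f) = true.

Theorem FL_sound (Lam : form -> Prop) f :
  FL Lam f -> forall v R, validates_instances Lam v R -> holds v R f = true.
Proof.
  induction 1 as [f Htaut| | |f Hf|s f _ IH|f g _ IHf _ IHfg]; intros v R HLam.
  - rewrite <- beval_holds; apply Htaut.
  - simpl; destruct (v 0), (v 1), (R p0 p1); reflexivity.
  - simpl; destruct (v 0), (v 1), (R p0 p1); reflexivity.
  - rewrite <- (subst_Var f); exact (HLam Var f Hf).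
  - rewrite holds_subst; apply IH; intros s' g Hg.
    rewrite <- holds_subst, subst_comp; exact (HLam _ g Hg).
  - specialize (IHfg v R HLam); simpl in IHfg.
    rewrite (IHf v R HLam) in IHfg; exact IHfg.
Qed.

Fixpoint fpow (A B : form) (n : nat) : form :=
  match n with
  | O => Loop B A
  | S k => Imp A (fpow A B k)
  end.

Lemma ppow_fpow p q n : ppow p q n = fpow (Var p) (Var q) n.
Proof. induction n; simpl; try rewrite IHn; reflexivity. Qed.

Lemma subst_fpow s A B n : subst s (fpow A B n) = fpow (subst s A) (subst s B) n.
Proof. induction n; simpl; try rewrite IHn; reflexivity. Qed.

Lemma fpow_inj_exponent A B A' B' k m : fpow A B k = fpow A' B' m -> k = m.
Proof.
  revert m; induction k as [|k IHk]; intros [|m] E; try discriminate; auto.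
  injection E; intros; f_equal; eauto.
Qed.

Lemma holds_fpow v R A B n :
  holds v R A = true -> holds v R B = true -> R B A = true ->
  holds v R (fpow A B n) = true.
Proof.
  intros HA HB HR; induction n as [|n IHn]; simpl.
  - rewrite HA, HB, HR; reflexivity.
  - rewrite HA, IHn; reflexivity.
Qed.

Definition form_eq_dec (f g : form) : {f = g} + {f <> g}.
Proof. decide equality; apply PeanoNat.Nat.eq_dec. Defined.

Definition unrelated_only (a0 b0 : form) (a b : form) : bool :=
  if form_eq_dec (Loop a b) (Loop a0 b0) then false else true.

Section Countermodel.

Variables (p q m : nat).

Let v (_ : nat) := false.
Let R := unrelated_only (Var q) (ppow p q m).

Lemma countermodel_refutes : holds v R (Loop (Var q) (ppow p q m)) = false.
Proof. simpl; unfold R, unrelated_only; destruct form_eq_dec; congruence. Qed.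

Lemma countermodel_validates (T : nat -> Prop) :
  (forall n, T n -> 0 < n) -> ~ T m -> validates_instances (LamT p q T) v R.
Proof.
  intros HTpos HTm s f [k [Hk ->]].
  assert (Hrel : forall a b, a <> Var q -> R a b = true).
  { intros a b Ha; unfold R, unrelated_only; destruct form_eq_dec; congruence. }
  simpl; rewrite ppow_fpow, subst_fpow; simpl.
  set (A := s p); set (B := s q).
  assert (HRk : R B (fpow A B k) = true).
  { unfold R, unrelated_only; destruct form_eq_dec as [E|]; [|reflexivity].
    rewrite ppow_fpow in E; injection E; intros E' _.
    apply fpow_inj_exponent in E'; subst k; contradiction. }
  rewrite HRk, andb_true_r.
  destruct (holds v R B) eqn:HB; [|reflexivity].
  assert (HBq : B <> Var q) by (intros ->; discriminate).
  destruct (holds v R A) eqn:HA.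
  - simpl; rewrite (holds_fpow v R A B k HA HB (Hrel B A HBq)); reflexivity.
  - destruct k as [|k]; [apply HTpos in Hk; inversion Hk|].
    simpl; rewrite HA; reflexivity.
Qed.

End Countermodel.

Lemma FL_LamT_not_derives p q (T : nat -> Prop) m :
  (forall n, T n -> 0 < n) -> ~ T m ->
  ~ FL (LamT p q T) (Loop (Var q) (ppow p q m)).
Proof.
  intros HTpos HTm Hder.
  pose proof (FL_sound _ _ Hder _ _ (countermodel_validates p q m T HTpos HTm)) as H.
  rewrite countermodel_refutes in H; discriminate.
Qed.

Lemma FL_LamT_incl_inv p q (P T : nat -> Prop) :
  (forall n, T n -> 0 < n) ->
  (forall f, FL (LamT p q P) f -> FL (LamT p q T) f) ->
  forall n, P n -> T n.
Proof.
  intros HTpos Hincl n Hn; apply NNPP; intro HTn.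
  apply (FL_LamT_not_derives p q T n HTpos HTn), Hincl, FL_lam.
  exists n; split; [exact Hn | reflexivity].
Qed.

Theorem mainTheorem9 (p q : nat) (P T : nat -> Prop) :
  p <> q ->
  (forall n, P n -> 0 < n) -> (exists n, P n) ->
  (forall n, T n -> 0 < n) -> (exists n, T n) ->
  ~ (forall n, P n <-> T n) ->
  ~ (forall f, FL (LamT p q P) f <-> FL (LamT p q T) f).
Proof.
  intros _ HPpos _ HTpos _ Hne Heq.
  apply Hne; intro n; split.
  - apply (FL_LamT_incl_inv p q P T HTpos); intro f; apply Heq.
  - apply (FL_LamT_incl_inv p q T P HPpos); intro f; apply Heq.
Qed.
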